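(* Let $x_{1:n}\in\mathcal X^n$ ($n\ge1$) have used alphabet size $m$ and counts $n_j$. Let $\beta^*:=m/\ln\frac nm$ if $m<n$, and if $m=n$ let $\beta^*=\infty$, where $S^\infty$ is defined by $S^\infty(x_{t+1}=i\mid x_{1:t})=w^t_i$ if $n^t_i=0$ and $0$ if $n^t_i>0$. Then $$R^{\beta^*}_S(x_{1:n}) \le \mathrm{CL}_w(\mathcal A) - \big(m-\tfrac12\big)\ln m + \sum_{j\in\mathcal A}\tfrac12\ln n_j - \tfrac12\ln n + m\ln\ln\frac{e\,n}{m} + 0.56\,m + 0.082 .$$
   Context: Let $\mathcal X$ be a finite base alphabet. For $x_{1:n}\in\mathcal X^n$, let $n_i$ be the number of occurrences of $i$ in $x_{1:n}$, $\mathcal A=\{x_1,\dots,x_n\}$, $m=|\mathcal A|$. For $0\le t\le n$ let $\mathcal A_t=\{x_1,\dots,x_t\}$ ($\mathcal A_0=\emptyset$), $n^t_i$ the number of occurrences of $i$ in $x_{1:t}$. New-symbol weights: for each $t$ and $i\in\mathcal X\setminus\mathcal A_t$ a number $w^t_i>0$ with $\sum_{k\in\mathcal X\setminus\mathcal A_t}w^t_k\le1$. For constant $\beta>0$, $S^\beta(x_{t+1}=i\mid x_{1:t})=n^t_i/(t+\beta)$ if $n^t_i>0$ and $\beta w^t_i/(t+\beta)$ if $n^t_i=0$; $S^\beta(x_{1:n})=\prod_{t=0}^{n-1}S^\beta(x_{t+1}\mid x_{1:t})$. $\mathrm{CL}_w(\mathcal A):=\sum_{t\in\{0,\dots,n-1\}:\,x_{t+1}\notin\mathcal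 A_t}\ln(1/w^t_{x_{t+1}})$. Redundancy $R^\beta_S(x_{1:n}):=\ln\big(n^{-n}\prod_{j\in\mathcal A}n_j^{n_j}\big)-\ln S^\beta(x_{1:n})$. Natural logarithms; $e$ is Euler's number. *)

From Stdlib Require Import Reals List Arith.
Import ListNotations.
Open Scope R_scope.

(* Alphabet X = {0, ..., K-1}; a sequence x_{1:n} is a list of length n.
   Index t (0-based position) holds the symbol x_{t+1}. *)

Definition rsum (l : list nat) (f : nat -> R) : R :=
  fold_right (fun a acc => f a + acc) 0 l.
Definition rprod (l : list nat) (f : nat -> R) : R :=
  fold_right (fun a acc => f a * acc) 1 l.

Definition cnt (x : list nat) (t i : nat) : nat :=
  count_occ Nat.eq_dec (firstn t x) i.

Definition sym (x : list nat) (t : nat) : nat := nth t x 0%nat.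

Definition nocc (x : list nat) (i : nat) : nat := cnt x (length x) i.

Definition usedA (K : nat) (x : list nat) : list nat :=
  filter (fun i => Nat.ltb 0 (nocc x i)) (seq 0 K).
Definition msize (K : nat) (x : list nat) : nat := length (usedA K x).

Definition valid_weights (K : nat) (x : list nat) (w : nat -> nat -> R) : Prop :=
  forall t, (t <= length x)%nat ->
    (forall i, (i < K)%nat -> cnt x t i = 0%nat -> 0 < w t i) /\
    rsum (filter (fun i => Nat.eqb (cnt x t i) 0) (seq 0 K)) (w t) <= 1.

Definition S_cond (beta : R) (w : nat -> nat -> R) (x : list nat) (t i : nat) : R :=
  if Nat.ltb 0 (cnt x t i)
  then INR (cnt x t i) / (INR t + beta)
  else beta * w t i / (INR t + beta).

Definition S_beta (beta : R) (w : nat -> nat -> R) (x : list nat) : R :=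
  rprod (seq 0 (length x)) (fun t => S_cond beta w x t (sym x t)).

Definition S_inf_cond (w : nat -> nat -> R) (x : list nat) (t i : nat) : R :=
  if Nat.ltb 0 (cnt x t i) then 0 else w t i.

Definition S_inf (w : nat -> nat -> R) (x : list nat) : R :=
  rprod (seq 0 (length x)) (fun t => S_inf_cond w x t (sym x t)).

Definition ML_term (K : nat) (x : list nat) : R :=
  ln (/ (INR (length x)) ^ (length x) *
      rprod (usedA K x) (fun j => INR (nocc x j) ^ (nocc x j))).

Definition redundancy (K : nat) (beta : R) (w : nat -> nat -> R) (x : list nat) : R :=
  ML_term K x - ln (S_beta beta w x).
Definition redundancy_inf (K : nat) (w : nat -> nat -> R) (x : list nat) : R :=
  ML_term K x - ln (S_inf w x).

Definition CL (w : nat -> nat -> R) (x : list nat) : R :=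
  rsum (filter (fun t => Nat.eqb (cnt x t (sym x t)) 0) (seq 0 (length x)))
       (fun t => ln (1 / w t (sym x t))).

Definition theorem4_rhs (K : nat) (w : nat -> nat -> R) (x : list nat) : R :=
  let n := INR (length x) in
  let m := INR (msize K x) in
  CL w x - (m - 1/2) * ln m
  + rsum (usedA K x) (fun j => 1/2 * ln (INR (nocc x j)))
  - 1/2 * ln n
  + m * ln (ln (exp 1 * n / m))
  + 56/100 * m + 82/1000.

From Stdlib Require Import Reals List Arith Lra Lia.
From Coquelicot Require Coquelicot.
Import ListNotations.
Open Scope R_scope.

(* Let c_t be the number of occurrences of x_{t+1} in x_{1:t}.  The predictive
   probability factorizes over time steps: a new symbol contributes
   beta w / (t + beta), an old one c_t / (t + beta).  Summing by telescoping
   (a sum over steps of g(c_t) is a sum over symbols of G(n_j) when g is the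
   forward difference of G) gives
       ln S^beta = m ln beta - CL + sum_j ln (n_j - 1)! - sum_{t<n} ln (t + beta).
   Stirling's inequality  n_j ln n_j - ln (n_j - 1)! - 1/2 ln n_j <= n_j - cS
   and the trapezoid bound for sum_t ln (t + beta) bound the redundancy for
   every beta > 0 ([redundancy_le]).  For beta = m / L with L = ln(n/m), the
   remainder is m times a function [excess L] of one variable plus a
   nonpositive term; excess L <= 0.4785 for all L > 0 is shown by interval
   arithmetic with rational certificates, using Taylor bounds for exp and
   truncated artanh series for ln.  When m = n every step is new, S^infty is the
   product of the weights, and the bound follows from Stirling alone. *)

Lemma rsum_nil f : rsum [] f = 0.
Proof. reflexivity. Qed.

Lemma rsum_cons a l f : rsum (a :: l) f = f a + rsum l f.
Proof. reflexivity. Qed.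

Lemma rsum_app l1 l2 f : rsum (l1 ++ l2) f = rsum l1 f + rsum l2 f.
Proof. induction l1 as [|a l1 IH]; [simpl; ring|]. simpl app. rewrite !rsum_cons, IH. ring. Qed.

Lemma rsum_ext_in l f g : (forall a, In a l -> f a = g a) -> rsum l f = rsum l g.
Proof.
  induction l as [|a l IH]; intros H; [reflexivity|]. rewrite !rsum_cons.
  rewrite H, IH; [reflexivity | intros; apply H | ]; simpl; auto.
Qed.

Lemma rsum_plus l f g : rsum l (fun a => f a + g a) = rsum l f + rsum l g.
Proof. induction l as [|a l IH]; [simpl; ring|]. rewrite !rsum_cons, IH. ring. Qed.

Lemma rsum_opp l f : rsum l (fun a => - f a) = - rsum l f.
Proof. induction l as [|a l IH]; [simpl; ring|]. rewrite !rsum_cons, IH. ring. Qed.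

Lemma rsum_scal l c f : rsum l (fun a => c * f a) = c * rsum l f.
Proof. induction l as [|a l IH]; [simpl; ring|]. rewrite !rsum_cons, IH. ring. Qed.

Lemma rsum_const l c : rsum l (fun _ => c) = INR (length l) * c.
Proof. induction l as [|a l IH]; [simpl; ring|]. rewrite rsum_cons, IH, length_cons, S_INR. ring. Qed.

Lemma rsum_le l f g : (forall a, In a l -> f a <= g a) -> rsum l f <= rsum l g.
Proof.
  induction l as [|a l IH]; intros H; [simpl; lra|]. rewrite !rsum_cons.
  apply Rplus_le_compat; [apply H; simpl; auto | apply IH; intros; apply H; simpl; auto].
Qed.

Lemma rsum_filter (p : nat -> bool) l f :
  rsum (filter p l) f = rsum l (fun a => if p a then f a else 0).
Proof.
  induction l as [|a l IH]; [reflexivity|]. cbn [filter]. rewrite (rsum_cons a l).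
  destruct (p a); rewrite ?rsum_cons, IH; ring.
Qed.

Lemma length_filter_rsum (p : nat -> bool) l :
  INR (length (filter p l)) = rsum l (fun a => if p a then 1 else 0).
Proof.
  rewrite <- (Rmult_1_r (INR _)), <- rsum_const, rsum_filter. reflexivity.
Qed.

Lemma rsum_point l a f g : NoDup l -> In a l -> (forall j, j <> a -> f j = g j) ->
  rsum l f = rsum l g + (f a - g a).
Proof.
  induction l as [|b l IH]; intros Hnd Hin Hfg; [destruct Hin|].
  inversion Hnd as [|? ? Hb Hnd']; subst. rewrite !rsum_cons.
  destruct Hin as [->|Hin].
  - rewrite (rsum_ext_in l f g) by (intros j Hj; apply Hfg; intros ->; auto). ring.
  - rewrite (IH Hnd' Hin Hfg), (Hfg b) by (intros ->; auto). ring.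
Qed.

Lemma rsum_nonneg l f : (forall a, In a l -> 0 <= f a) -> 0 <= rsum l f.
Proof. intros H. rewrite <- (Rmult_0_r (INR (length l))), <- rsum_const. apply rsum_le, H. Qed.

Lemma rsum_zero_nonneg l f : (forall a, In a l -> 0 <= f a) -> rsum l f = 0 ->
  forall a, In a l -> f a = 0.
Proof.
  induction l as [|b l IH]; intros Hp Hs a Ha; [destruct Ha|].
  rewrite rsum_cons in Hs.
  assert (Hb : 0 <= f b) by (apply Hp; simpl; auto).
  assert (Hl : 0 <= rsum l f) by (apply rsum_nonneg; intros; apply Hp; simpl; auto).
  destruct Ha as [->|Ha]; [lra|]. apply IH; auto. intros; apply Hp; simpl; auto. lra.
Qed.

Lemma ln_rprod l f : (forall a, In a l -> 0 < f a) ->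
  0 < rprod l f /\ ln (rprod l f) = rsum l (fun a => ln (f a)).
Proof.
  induction l as [|a l IH]; intros H; simpl; [split; [lra | apply ln_1]|].
  destruct IH as [H1 H2]; [intros; apply H; simpl; auto|].
  assert (Ha : 0 < f a) by (apply H; simpl; auto).
  split; [apply Rmult_lt_0_compat; auto|]. rewrite ln_mult by auto. fold (rprod l f). rewrite H2. reflexivity.
Qed.

Lemma cnt_snoc x a t i : (t <= length x)%nat -> cnt (x ++ [a]) t i = cnt x t i.
Proof.
  intros Ht. unfold cnt. rewrite firstn_app.
  replace (t - length x)%nat with 0%nat by lia. simpl. rewrite app_nil_r. reflexivity.
Qed.

Lemma sym_snoc x a t : (t < length x)%nat -> sym (x ++ [a]) t = sym x t.
Proof. intros Ht. unfold sym. apply app_nth1; auto. Qed.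

Lemma sym_last x a : sym (x ++ [a]) (length x) = a.
Proof. unfold sym. rewrite app_nth2, Nat.sub_diag by lia. reflexivity. Qed.

Lemma cnt_last x a : cnt (x ++ [a]) (length x) a = nocc x a.
Proof. rewrite cnt_snoc by lia. reflexivity. Qed.

Lemma nocc_snoc x a j : nocc (x ++ [a]) j = (nocc x j + if Nat.eq_dec a j then 1 else 0)%nat.
Proof.
  unfold nocc, cnt. rewrite !firstn_all, count_occ_app. simpl.
  destruct (Nat.eq_dec a j); reflexivity.
Qed.

Lemma sym_lt K x t : Forall (fun a => (a < K)%nat) x -> (t < length x)%nat -> (sym x t < K)%nat.
Proof. intros Hx Ht. rewrite Forall_forall in Hx. apply Hx, nth_In, Ht. Qed.

Definition step_sum (g : nat -> R) (x : list nat) : R :=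
  rsum (seq 0 (length x)) (fun t => g (cnt x t (sym x t))).
Definition symbol_sum (K : nat) (G : nat -> R) (x : list nat) : R :=
  rsum (seq 0 K) (fun j => G (nocc x j)).

Lemma step_sum_snoc g x a : step_sum g (x ++ [a]) = step_sum g x + g (nocc x a).
Proof.
  unfold step_sum. rewrite length_app, Nat.add_1_r, seq_S, rsum_app, rsum_cons, rsum_nil.
  rewrite Nat.add_0_l, sym_last, cnt_last, Rplus_0_r. f_equal.
  apply rsum_ext_in. intros t Ht. apply in_seq in Ht.
  rewrite sym_snoc, cnt_snoc by lia. reflexivity.
Qed.

Lemma symbol_sum_snoc K G x a : (a < K)%nat ->
  symbol_sum K G (x ++ [a]) = symbol_sum K G x + (G (S (nocc x a)) - G (nocc x a)).
Proof.
  intros Ha. unfold symbol_sum.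
  rewrite (rsum_point (seq 0 K) a (fun j => G (nocc (x ++ [a]) j)) (fun j => G (nocc x j))).
  - rewrite nocc_snoc. destruct (Nat.eq_dec a a) as [_|]; [|congruence].
    rewrite Nat.add_1_r. reflexivity.
  - apply seq_NoDup.
  - apply in_seq. lia.
  - intros j Hj. rewrite nocc_snoc. destruct (Nat.eq_dec a j); [congruence|].
    rewrite Nat.add_0_r. reflexivity.
Qed.

Lemma step_sum_telescope K g G x : Forall (fun a => (a < K)%nat) x -> G 0%nat = 0 ->
  (forall k, G (S k) - G k = g k) -> step_sum g x = symbol_sum K G x.
Proof.
  intros Hx HG0 Hg. induction x as [|a x IH] using rev_ind.
  - unfold step_sum, symbol_sum. simpl. rewrite (rsum_ext_in _ _ (fun _ => 0)).
    + rewrite rsum_const. ring.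
    + intros j _. exact HG0.
  - apply Forall_app in Hx as [Hx Ha]. inversion Ha; subst.
    rewrite step_sum_snoc, symbol_sum_snoc, IH, Hg by auto. reflexivity.
Qed.

Definition is_new (k : nat) : R := if Nat.eqb k 0 then 1 else 0.
Definition old_log (k : nat) : R := if Nat.eqb k 0 then 0 else ln (INR k).

Definition lnfact (k : nat) : R := rsum (seq 1 k) (fun i => ln (INR i)).

Lemma lnfact_S k : lnfact (S k) = lnfact k + ln (INR (S k)).
Proof.
  unfold lnfact. rewrite seq_S, rsum_app, rsum_cons, rsum_nil.
  replace (1 + k)%nat with (S k) by lia. ring.
Qed.

Lemma msize_step_sum K x : Forall (fun a => (a < K)%nat) x -> INR (msize K x) = step_sum is_new x.
Proof.
  intros Hx. unfold msize, usedA. rewrite length_filter_rsum.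
  rewrite (step_sum_telescope K is_new (fun k => if Nat.ltb 0 k then 1 else 0)); auto.
  intros [|k]; unfold is_new; simpl; ring.
Qed.

Lemma length_symbol_sum K x : Forall (fun a => (a < K)%nat) x -> INR (length x) = symbol_sum K INR x.
Proof.
  intros Hx. rewrite <- (step_sum_telescope K (fun _ => 1) INR); auto.
  - unfold step_sum. rewrite rsum_const, length_seq. ring.
  - intros k. rewrite S_INR. ring.
Qed.

Lemma old_log_symbol_sum K x : Forall (fun a => (a < K)%nat) x ->
  step_sum old_log x = symbol_sum K (fun k => lnfact (k - 1)) x.
Proof.
  intros Hx. apply step_sum_telescope; auto.
  intros [|k]; unfold old_log; simpl Nat.eqb.
  - simpl. ring.
  - replace (S (S k) - 1)%nat with (S k) by lia. replace (S k - 1)%nat with k by lia.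
    rewrite lnfact_S. ring.
Qed.

Lemma msize_ge1 K x : Forall (fun a => (a < K)%nat) x -> (1 <= length x)%nat -> 1 <= INR (msize K x).
Proof.
  intros Hx Hn. rewrite (msize_step_sum K x Hx). unfold step_sum.
  destruct (length x) as [|n]; [lia|]. cbn [seq]. rewrite rsum_cons.
  assert (Hrest : 0 <= rsum (seq 1 n) (fun t => is_new (cnt x t (sym x t))))
    by (apply rsum_nonneg; intros; unfold is_new; destruct (Nat.eqb _ 0); lra).
  unfold is_new at 1, cnt at 1. simpl. lra.
Qed.

Lemma all_steps_new K x : Forall (fun a => (a < K)%nat) x -> msize K x = length x ->
  forall t, (t < length x)%nat -> cnt x t (sym x t) = 0%nat.
Proof.
  intros Hx Hm t Ht.
  assert (Hsum := msize_step_sum K x Hx). rewrite Hm in Hsum. unfold step_sum in Hsum.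
  assert (Hz : rsum (seq 0 (length x)) (fun t => 1 - is_new (cnt x t (sym x t))) = 0).
  { unfold Rminus. rewrite rsum_plus, rsum_opp, rsum_const, length_seq, <- Hsum. ring. }
  assert (Hnn : forall k, 0 <= 1 - is_new k) by (intros k; unfold is_new; destruct (Nat.eqb k 0); lra).
  assert (Hq := rsum_zero_nonneg _ _ (fun t _ => Hnn _) Hz t ltac:(apply in_seq; lia)).
  unfold is_new in Hq. destruct (cnt x t (sym x t)); [reflexivity | simpl in Hq; lra].
Qed.

(* Real-analysis estimates.  They use Coquelicot's derivatives, which are
   imported only inside this module (Coquelicot's [Forall] would otherwise
   shadow the list predicate used in the statement). *)
Module AnalyticBounds.
Import Coquelicot.Coquelicot.

Lemma le_of_nonneg_derive (g dg : R -> R) (a x : R) :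
  a <= x ->
  (forall c, a <= c <= x -> is_derive g c (dg c)) ->
  (forall c, a <= c <= x -> 0 <= dg c) -> g a <= g x.
Proof.
  intros Hax Hd Hp.
  destruct (Req_dec a x) as [->|Hne]; [lra|].
  destruct (MVT_cor2 g dg a x ltac:(lra)) as [c [Hc Hc']].
  - intros c Hc. apply is_derive_Reals, Hd. lra.
  - assert (0 <= dg c * (x - a)) by (apply Rmult_le_pos; [apply Hp|]; lra). lra.
Qed.

Lemma exp_le_mono x y : x <= y -> exp x <= exp y.
Proof. intros [H|H]; [left; apply exp_increasing; exact H | subst; lra]. Qed.

Lemma ln_le_mono x y : 0 < x -> x <= y -> ln x <= ln y.
Proof. intros Hx [H|H]; [left; apply ln_increasing; assumption | subst; lra]. Qed.

Lemma exp_ge1 x : 0 <= x -> 1 <= exp x.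
Proof. intros. generalize (exp_ineq1_le x). lra. Qed.

Lemma exp_le1 x : x <= 0 -> exp x <= 1.
Proof. intros. rewrite <- exp_0. apply exp_le_mono. lra. Qed.

Lemma ln_nonneg x : 1 <= x -> 0 <= ln x.
Proof. intros. rewrite <- ln_1. apply ln_le_mono; lra. Qed.

Lemma ln_nonpos x : 0 < x -> x <= 1 -> ln x <= 0.
Proof. intros. rewrite <- ln_1. apply ln_le_mono; lra. Qed.

(* Each bound follows from the
   previous one by integrating, i.e. by [le_of_nonneg_derive]. *)
Definition T1 x := 1 + x.
Definition T2 x := T1 x + x^2/2.
Definition T3 x := T2 x + x^3/6.
Definition T4 x := T3 x + x^4/24.
Definition T5 x := T4 x + x^5/120.
Definition T6 x := T5 x + x^6/720.

Definition U0 (x : R) := 1.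
Definition U1 x := U0 x - x.
Definition U2 x := U1 x + x^2/2.
Definition U3 x := U2 x - x^3/6.
Definition U4 x := U3 x + x^4/24.
Definition U5 x := U4 x - x^5/120.

Lemma exp_lower_step (T P : R -> R) : T 0 = 1 -> (forall c, is_derive T c (P c)) ->
  (forall c, 0 <= c -> P c <= exp c) -> forall x, 0 <= x -> T x <= exp x.
Proof.
  intros H0 Hd Hp x Hx.
  apply (le_of_nonneg_derive (fun t => exp t - T t) (fun t => exp t - P t) 0 x) in Hx.
  - rewrite exp_0, H0 in Hx. lra.
  - intros c _. apply (is_derive_minus exp T); [|apply Hd].
    apply is_derive_Reals, derivable_pt_lim_exp.
  - intros c Hc. specialize (Hp c ltac:(lra)). lra.
Qed.

Lemma expneg_lower_step (U P : R -> R) : U 0 = 1 -> (forall c, is_derive U c (- P c)) ->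
  (forall c, 0 <= c -> exp (-c) <= P c) -> forall x, 0 <= x -> U x <= exp (-x).
Proof.
  intros H0 Hd Hp x Hx.
  apply (le_of_nonneg_derive (fun t => exp (-t) - U t) (fun t => P t - exp (-t)) 0 x) in Hx.
  - rewrite Ropp_0, exp_0, H0 in Hx. lra.
  - intros c _. replace (P c - exp (-c)) with (- exp (-c) - - P c) by ring.
    apply (is_derive_minus (fun t => exp (-t)) U); [auto_derive; auto; ring | apply Hd].
  - intros c Hc. specialize (Hp c ltac:(lra)). lra.
Qed.

Lemma expneg_upper_step (U P : R -> R) : U 0 = 1 -> (forall c, is_derive U c (- P c)) ->
  (forall c, 0 <= c -> P c <= exp (-c)) -> forall x, 0 <= x -> exp (-x) <= U x.
Proof.
  intros H0 Hd Hp x Hx.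
  apply (le_of_nonneg_derive (fun t => U t - exp (-t)) (fun t => exp (-t) - P t) 0 x) in Hx.
  - rewrite Ropp_0, exp_0, H0 in Hx. lra.
  - intros c _. replace (exp (-c) - P c) with (- P c - - exp (-c)) by ring.
    apply (is_derive_minus U (fun t => exp (-t))); [apply Hd | auto_derive; auto; ring].
  - intros c Hc. specialize (Hp c ltac:(lra)). lra.
Qed.

Ltac unfold_taylor := unfold T6, T5, T4, T3, T2, T1, U5, U4, U3, U2, U1, U0.

Ltac taylor_step prev :=
  first [unfold_taylor; field | intros; unfold_taylor; auto_derive; auto; field | exact prev].

Lemma exp_T1 x : 0 <= x -> T1 x <= exp x.
Proof. intros. apply exp_ineq1_le. Qed.
Lemma exp_T2 : forall x, 0 <= x -> T2 x <= exp x.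
Proof. apply (exp_lower_step T2 T1); taylor_step exp_T1. Qed.
Lemma exp_T3 : forall x, 0 <= x -> T3 x <= exp x.
Proof. apply (exp_lower_step T3 T2); taylor_step exp_T2. Qed.
Lemma exp_T4 : forall x, 0 <= x -> T4 x <= exp x.
Proof. apply (exp_lower_step T4 T3); taylor_step exp_T3. Qed.
Lemma exp_T5 : forall x, 0 <= x -> T5 x <= exp x.
Proof. apply (exp_lower_step T5 T4); taylor_step exp_T4. Qed.
Lemma exp_T6 : forall x, 0 <= x -> T6 x <= exp x.
Proof. apply (exp_lower_step T6 T5); taylor_step exp_T5. Qed.

Lemma expneg_U1 x : 0 <= x -> U1 x <= exp (-x).
Proof. intros. unfold U1, U0. generalize (exp_ineq1_le (-x)). lra. Qed.
Lemma expneg_U2 : forall x, 0 <= x -> exp (-x) <= U2 x.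
Proof. apply (expneg_upper_step U2 U1); taylor_step expneg_U1. Qed.
Lemma expneg_U3 : forall x, 0 <= x -> U3 x <= exp (-x).
Proof. apply (expneg_lower_step U3 U2); taylor_step expneg_U2. Qed.
Lemma expneg_U4 : forall x, 0 <= x -> exp (-x) <= U4 x.
Proof. apply (expneg_upper_step U4 U3); taylor_step expneg_U3. Qed.
Lemma expneg_U5 : forall x, 0 <= x -> U5 x <= exp (-x).
Proof. apply (expneg_lower_step U5 U4); taylor_step expneg_U4. Qed.

(* Truncations of the series ln((1+y)/(1-y)) = 2 (y + y^3/3 + y^5/5 + ...),
   bracketing it for 0 <= y < 1; they give sharp rational bounds for logarithms. *)
Definition artanh_lo (y : R) := 2 * (y + y^3/3 + y^5/5 + y^7/7).
Definition artanh_hi (y : R) := 2 * (y + y^3/3 + y^5/5) + 2 * y^7 / (7 * (1 - y^2)).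

Lemma artanh_lo_le y : 0 <= y < 1 -> artanh_lo y <= ln (1 + y) - ln (1 - y).
Proof.
  intros Hy.
  assert (H := le_of_nonneg_derive (fun t => ln (1+t) - ln (1-t) - artanh_lo t)
     (fun t => 2 * t^8 / (1 - t^2)) 0 y (proj1 Hy)).
  unfold artanh_lo in *. rewrite Rplus_0_r, Rminus_0_r, ln_1 in H.
  enough (0 <= ln (1 + y) - ln (1 - y) - 2 * (y + y ^ 3 / 3 + y ^ 5 / 5 + y ^ 7 / 7)) by lra.
  replace 0 with (0 - 0 - 2 * (0 + 0 ^ 3 / 3 + 0 ^ 5 / 5 + 0 ^ 7 / 7)) by field.
  apply H.
  - intros c Hc. auto_derive; [repeat split; lra|]. field. split; nra.
  - intros c Hc. apply Rmult_le_pos; [|left; apply Rinv_0_lt_compat; nra].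
    apply Rmult_le_pos; [lra | apply pow_le; lra].
Qed.

Lemma artanh_hi_ge y : 0 <= y < 1 -> ln (1 + y) - ln (1 - y) <= artanh_hi y.
Proof.
  intros Hy.
  assert (H := le_of_nonneg_derive (fun t => artanh_hi t - (ln (1+t) - ln (1-t)))
     (fun t => 4/7 * t^8 / (1 - t^2)^2) 0 y (proj1 Hy)).
  unfold artanh_hi in *. rewrite Rplus_0_r, Rminus_0_r, ln_1 in H.
  enough (0 <= 2 * (y + y ^ 3 / 3 + y ^ 5 / 5) + 2 * y ^ 7 / (7 * (1 - y ^ 2))
               - (ln (1 + y) - ln (1 - y))) by lra.
  replace 0 with (2 * (0 + 0 ^ 3 / 3 + 0 ^ 5 / 5) + 2 * 0 ^ 7 / (7 * (1 - 0 ^ 2)) - (0 - 0))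
    by field.
  apply H.
  - intros c Hc. auto_derive; [repeat split; try lra; nra|]. field. repeat split; nra.
  - intros c Hc. apply Rmult_le_pos; [|left; apply Rinv_0_lt_compat, pow_lt; nra].
    apply Rmult_le_pos; [lra | apply pow_le; lra].
Qed.

Lemma ln_as_artanh q : 1 <= q ->
  0 <= (q-1)/(q+1) < 1 /\ ln q = ln (1 + (q-1)/(q+1)) - ln (1 - (q-1)/(q+1)).
Proof.
  intros Hq. set (y := (q-1)/(q+1)).
  assert (Hy : 0 <= y < 1).
  { unfold y. split; [apply Rmult_le_pos; [lra | left; apply Rinv_0_lt_compat; lra]|].
    apply (Rmult_lt_reg_r (q+1)); [lra|]. field_simplify; lra. }
  split; [exact Hy|].
  replace (ln (1 + y) - ln (1 - y)) with (ln (1 + y) + ln (/ (1 - y)))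
    by (rewrite ln_Rinv by lra; ring).
  rewrite <- ln_mult by (try apply Rinv_0_lt_compat; lra).
  f_equal. unfold y. field. lra.
Qed.

Lemma ln_le_artanh_hi q : 1 <= q -> ln q <= artanh_hi ((q-1)/(q+1)).
Proof. intros Hq. destruct (ln_as_artanh q Hq) as [Hy ->]. apply artanh_hi_ge, Hy. Qed.

Lemma artanh_lo_le_ln q : 1 <= q -> artanh_lo ((q-1)/(q+1)) <= ln q.
Proof. intros Hq. destruct (ln_as_artanh q Hq) as [Hy ->]. apply artanh_lo_le, Hy. Qed.

Lemma ln2_lo : 6931/10000 <= ln 2.
Proof. generalize (artanh_lo_le_ln 2 ltac:(lra)). unfold artanh_lo. lra. Qed.

Lemma ln2_hi : ln 2 <= 69316/100000.
Proof. generalize (ln_le_artanh_hi 2 ltac:(lra)). unfold artanh_hi. lra. Qed.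

Lemma ln_1p_inv_hi a : 0 < a -> ln (1 + 1/a) <= artanh_hi (1/(2*a+1)).
Proof.
  intros Ha. assert (0 < 1/a) by (apply Rdiv_lt_0_compat; lra).
  replace (1/(2*a+1)) with ((1 + 1/a - 1)/(1 + 1/a + 1)) by (field; lra).
  apply ln_le_artanh_hi. lra.
Qed.

Lemma ln_1p_inv_lo a : 0 < a -> artanh_lo (1/(2*a+1)) <= ln (1 + 1/a).
Proof.
  intros Ha. assert (0 < 1/a) by (apply Rdiv_lt_0_compat; lra).
  replace (1/(2*a+1)) with ((1 + 1/a - 1)/(1 + 1/a + 1)) by (field; lra).
  apply artanh_lo_le_ln. lra.
Qed.

Lemma ln_succ a : 0 < a -> ln (a + 1) - ln a = ln (1 + 1/a).
Proof.
  intros Ha. assert (0 < 1/a) by (apply Rdiv_lt_0_compat; lra).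
  replace (a + 1) with (a * (1 + 1/a)) by (field; lra).
  rewrite ln_mult by lra. ring.
Qed.

Lemma ln_le_sub1 x : 0 < x -> ln x <= x - 1.
Proof.
  intros Hx. rewrite <- (ln_exp (x - 1)). apply ln_le_mono; [exact Hx|].
  generalize (exp_ineq1_le (x - 1)). lra.
Qed.

Lemma ln_ge_1inv x : 0 < x -> 1 - 1/x <= ln x.
Proof.
  intros Hx. assert (H := ln_le_sub1 (/x) ltac:(apply Rinv_0_lt_compat; lra)).
  rewrite ln_Rinv in H by lra. unfold Rdiv. lra.
Qed.

Lemma ln_tangent a L : 0 < a -> 0 < L -> ln L <= ln a + (L - a)/a.
Proof.
  intros Ha HL. assert (H := ln_le_sub1 (L/a) ltac:(apply Rdiv_lt_0_compat; lra)).
  unfold Rdiv in H. rewrite ln_mult, ln_Rinv in H by (try apply Rinv_0_lt_compat; lra).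
  replace ((L - a) / a) with (L * / a - 1) by (field; lra). lra.
Qed.

Lemma ln_le_div_e x : 0 < x -> ln x <= x / exp 1.
Proof.
  intros Hx. assert (He := exp_pos 1).
  assert (H := ln_le_sub1 (x / exp 1) ltac:(apply Rdiv_lt_0_compat; lra)).
  unfold Rdiv in H. rewrite ln_mult, ln_Rinv, ln_exp in H by (try apply Rinv_0_lt_compat; lra).
  unfold Rdiv. lra.
Qed.

(* Pade-type upper bound for ln(1+z), z >= 0, and the monotone rational
   function psi appearing when it is applied to (u+1) ln(1 + 1/u). *)
Lemma ln_1p_pade z : 0 <= z -> ln (1 + z) <= z * (6 + z) / (6 + 4 * z).
Proof.
  intros Hz.
  assert (H := le_of_nonneg_derive (fun t => t * (6 + t) / (6 + 4 * t) - ln (1 + t))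
     (fun t => 4 * t^3 / ((6 + 4*t)^2 * (1 + t))) 0 z Hz).
  cbv beta in H. replace (0 * (6 + 0) / (6 + 4 * 0) - ln (1 + 0)) with 0 in H
    by (replace (1 + 0) with 1 by ring; rewrite ln_1; field).
  enough (0 <= z * (6 + z) / (6 + 4 * z) - ln (1 + z)) by lra.
  apply H.
  - intros c Hc. auto_derive; [repeat split; lra|]. field. lra.
  - intros c Hc. apply Rmult_le_pos; [apply Rmult_le_pos; [lra | apply pow_le; lra]|].
    left; apply Rinv_0_lt_compat, Rmult_lt_0_compat; [apply pow_lt|]; lra.
Qed.

Definition psi z := z * (3 + z) / (6 + 4 * z).

Lemma psi_mono z1 z2 : 0 <= z1 <= z2 -> psi z1 <= psi z2.
Proof.
  intros [H1 H2]. unfold psi.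
  apply (Rmult_le_reg_r ((6 + 4*z1) * (6 + 4*z2))); [nra|].
  replace (z1 * (3 + z1) / (6 + 4 * z1) * ((6 + 4 * z1) * (6 + 4 * z2))) with
     (z1 * (3 + z1) * (6 + 4 * z2)) by (field; lra).
  replace (z2 * (3 + z2) / (6 + 4 * z2) * ((6 + 4 * z1) * (6 + 4 * z2))) with
     (z2 * (3 + z2) * (6 + 4 * z1)) by (field; lra).
  assert (0 <= (z2 - z1) * (18 + 6*(z1+z2) + 4*z1*z2)) by (apply Rmult_le_pos; nra).
  nra.
Qed.

Lemma ln_1p_inv_pade u : 0 < u -> (u + 1) * ln (1 + 1/u) <= 1 + psi (1/u).
Proof.
  intros Hu. assert (Hz : 0 < 1/u) by (apply Rdiv_lt_0_compat; lra).
  apply Rle_trans with ((u+1) * (1/u * (6 + 1/u) / (6 + 4 * (1/u)))).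
  - apply Rmult_le_compat_l; [lra | apply ln_1p_pade; lra].
  - unfold psi. right. field. split; lra.
Qed.

Definition hh L := L * ln (1 + 1/L).

Lemma hh_mono a L : 0 < a <= L -> hh a <= hh L.
Proof.
  intros [Ha HL]. unfold hh.
  apply (le_of_nonneg_derive (fun t => t * ln (1 + 1/t)) (fun t => ln (1 + 1/t) - 1/(t+1)) a L HL).
  - intros c Hc. assert (0 < 1/c) by (apply Rdiv_lt_0_compat; lra).
    auto_derive; [repeat split; lra|]. unfold Rdiv. field. split; lra.
  - intros c Hc. assert (0 < 1/c) by (apply Rdiv_lt_0_compat; lra).
    assert (Hln := ln_ge_1inv (1 + 1/c) ltac:(lra)).
    replace (1 - 1 / (1 + 1 / c)) with (1/(c+1)) in Hln by (field; lra). lra.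
Qed.

(* The one-variable function behind the constant 0.56.  With L = ln(n/m) and
   beta = m/L, the trapezoid and Stirling bounds leave, per used symbol, the
   quantity [excess L] (plus 1 - cS), and the theorem needs excess L <= 0.4785
   for every L > 0.  Its supremum is about 0.4761 (near L = 1.26), so the bound
   is proved by interval arithmetic: directly near 0 and for L >= 6, and on
   (13/256, 6) on a subdivision into small intervals, each with a rational
   certificate. *)
Definition excess_bound_const := 4785/10000.

Definition excess L := (exp L * L + 1) * ln (1 + exp L * L) / L + (1 - exp L) * ln L
                       - exp L * L - 1 - ln (1 + L).

(* Form used for L <= 1. *)
Lemma excess_small_form L : 0 < L ->
  excess L = (exp L + 1/L) * ln (L + exp (-L)) + (exp L - 1) * (- ln L) - ln (1 + L).
Proof.
  intros HL. unfold excess.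
  assert (E : 1 + exp L * L = exp L * (L + exp (-L))).
  { rewrite Rmult_plus_distr_l, <- exp_plus, Rplus_opp_r, exp_0. ring. }
  assert (Hp : 0 < L + exp (-L)) by (generalize (exp_pos (-L)); lra).
  rewrite E, ln_mult, ln_exp by (try apply exp_pos; lra).
  field. lra.
Qed.

(* Form used for L > 0.6. *)
Lemma excess_large_form L : 0 < L ->
  L * excess L = (exp L * L + 1) * ln (1 + 1/(exp L * L)) + ln L - hh L.
Proof.
  intros HL. unfold excess, hh.
  assert (Hu : 0 < exp L * L) by (apply Rmult_lt_0_compat; [apply exp_pos | lra]).
  assert (Hu' : 0 < 1/(exp L * L)) by (apply Rdiv_lt_0_compat; lra).
  assert (HL' : 0 < 1/L) by (apply Rdiv_lt_0_compat; lra).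
  assert (E1 : ln (1 + exp L * L) = L + ln L + ln (1 + 1/(exp L * L))).
  { replace (1 + exp L * L) with ((exp L * L) * (1 + 1/(exp L * L)))
      by (field; split; [lra | apply Rgt_not_eq, exp_pos]).
    rewrite !ln_mult, ln_exp; try lra; apply exp_pos. }
  assert (E2 : ln (1 + L) = ln L + ln (1 + 1/L)).
  { replace (1 + L) with (L * (1 + 1/L)) by (field; lra). rewrite ln_mult; lra. }
  rewrite E1, E2. field. lra.
Qed.

Lemma T6_ge1 a : 0 <= a -> 1 <= T6 a.
Proof.
  intros Ha. unfold_taylor.
  assert (0 <= a^2) by (apply pow_le; lra). assert (0 <= a^3) by (apply pow_le; lra).
  assert (0 <= a^4) by (apply pow_le; lra). assert (0 <= a^5) by (apply pow_le; lra).
  assert (0 <= a^6) by (apply pow_le; lra). lra.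
Qed.

Lemma exp_le_inv_U5 b : 0 <= b -> 0 < U5 b -> exp b <= 1 / U5 b.
Proof.
  intros Hb HU. assert (H := expneg_U5 b Hb). rewrite exp_Ropp in H.
  assert (He : 0 < exp b) by apply exp_pos.
  apply (Rmult_le_reg_r (U5 b)); [exact HU|].
  replace (1 / U5 b * U5 b) with 1 by (field; lra).
  apply (Rmult_le_reg_l (/ exp b)); [apply Rinv_0_lt_compat; exact He|].
  replace (/ exp b * (exp b * U5 b)) with (U5 b) by (field; lra). lra.
Qed.

Lemma expneg_le_inv_T6 b : 0 <= b -> exp (-b) <= 1 / T6 b.
Proof.
  intros Hb. rewrite exp_Ropp. unfold Rdiv. rewrite Rmult_1_l.
  apply Rinv_le_contravar; [generalize (T6_ge1 b Hb); lra | apply exp_T6, Hb].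
Qed.

Lemma ln_le_of_T6 a l : 0 < a -> 0 <= l -> a <= T6 l -> ln a <= l.
Proof.
  intros Ha Hl H. rewrite <- (ln_exp l). apply ln_le_mono; [exact Ha|].
  apply Rle_trans with (T6 l); [exact H | apply exp_T6, Hl].
Qed.

Lemma ln_le_of_U5 a l : 0 < a -> l <= 0 -> a <= U5 (-l) -> ln a <= l.
Proof.
  intros Ha Hl H. rewrite <- (ln_exp l). apply ln_le_mono; [exact Ha|].
  apply Rle_trans with (U5 (-l)); [exact H|]. rewrite <- (Ropp_involutive l) at 2.
  apply expneg_U5. lra.
Qed.

Lemma ln_ge_of_U5 q t : 0 < q -> 0 <= t -> 0 < U5 t -> 1 <= q * U5 t -> t <= ln q.
Proof.
  intros Hq Ht HU H. rewrite <- (ln_exp t). apply ln_le_mono; [apply exp_pos|].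
  apply Rle_trans with (1 / U5 t); [apply exp_le_inv_U5; assumption|].
  apply (Rmult_le_reg_r (U5 t)); [exact HU|]. replace (1 / U5 t * U5 t) with 1 by (field; lra). lra.
Qed.

Lemma L_plus_expneg_ge1 L : 0 <= L -> 1 <= L + exp (-L).
Proof. intros HL. generalize (expneg_U1 L HL). unfold U1, U0. lra. Qed.

Lemma L_plus_expneg_mono L b : 0 <= L <= b -> L + exp (-L) <= b + exp (-b).
Proof.
  intros HL. apply (le_of_nonneg_derive (fun t => t + exp (-t)) (fun t => 1 - exp (-t)) L b); [lra| |].
  - intros c _. auto_derive; auto. ring.
  - intros c Hc. generalize (exp_le1 (-c) ltac:(lra)). lra.
Qed.

Lemma affine_below_on_interval a b c k L : 0 < a -> a <= L <= b ->
  c <= k * a -> c + (b - a)/a <= k * b -> c + (L - a)/a <= k * L.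
Proof.
  intros Ha HL Hla Hlb.
  destruct (Req_dec a b) as [<-|Hab]; [replace L with a by lra; lra|].
  assert (E : (b - a) * (c + (L - a)/a - k * L)
            = (b - L) * (c - k * a) + (L - a) * (c + (b - a)/a - k * b)) by (field; lra).
  assert (0 <= (b - L) * (k * a - c)) by (apply Rmult_le_pos; lra).
  assert (0 <= (L - a) * (k * b - c - (b - a)/a)) by (apply Rmult_le_pos; lra).
  assert (Hg : (b - a) * (c + (L - a)/a - k * L) <= (b - a) * 0) by lra.
  apply Rmult_le_reg_l in Hg; lra.
Qed.

(* For 0 < L <= 1: (e^L - 1) ln(1/L) <= e^(L-1), from e^L - 1 <= L e^L and
   ln y <= y/e. *)
Lemma expm1_mul_ln_inv L : 0 < L <= 1 -> (exp L - 1) * (- ln L) <= exp (L - 1).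
Proof.
  intros HL. assert (He := exp_pos L).
  assert (Hm : - ln L = ln (1/L)) by (unfold Rdiv; rewrite Rmult_1_l, ln_Rinv; lra).
  assert (Hinv : 1 <= 1/L) by (apply (Rmult_le_reg_r L); [lra|]; field_simplify; lra).
  assert (Hx : ln (1/L) <= (1/L) / exp 1) by (apply ln_le_div_e; lra).
  assert (Hy : exp L - 1 <= L * exp L).
  { assert (H := expneg_U1 L ltac:(lra)). unfold U1, U0 in H.
    assert (E : exp (-L) * exp L = 1) by (rewrite <- exp_plus, Rplus_opp_l; apply exp_0).
    nra. }
  assert (0 <= exp L - 1) by (generalize (exp_ge1 L ltac:(lra)); lra).
  rewrite Hm. apply Rle_trans with ((L * exp L) * ((1/L) / exp 1)).
  - apply Rmult_le_compat; [lra | apply ln_nonneg; lra | lra | lra].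
  - right. unfold Rminus. rewrite exp_plus, exp_Ropp. field.
    split; [apply Rgt_not_eq, exp_pos | lra].
Qed.

Ltac numc := unfold_taylor; unfold psi, excess_bound_const; lra.

(* Near 0, ln(L + e^{-L}) <= L^2/2 makes the first term of the small form
   O(L) and the second is at most e^(L-1). *)
Lemma excess_bound_near0 L : 0 < L <= 13/256 -> excess L <= excess_bound_const.
Proof.
  intros HL. rewrite excess_small_form by lra.
  assert (He := exp_pos L).
  assert (Hq0 : 0 <= ln (L + exp (-L))) by (apply ln_nonneg, L_plus_expneg_ge1; lra).
  assert (Hq : ln (L + exp (-L)) <= L^2/2).
  { assert (H := ln_le_sub1 (L + exp (-L)) ltac:(generalize (exp_pos (-L)); lra)).
    generalize (expneg_U2 L ltac:(lra)). unfold U2, U1, U0. lra. }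
  assert (HeL : exp L <= 1 / U5 (13/256)).
  { apply Rle_trans with (exp (13/256)); [apply exp_le_mono; lra|].
    apply exp_le_inv_U5; numc. }
  assert (P1 : (exp L + 1/L) * ln (L + exp (-L)) <= (exp L * L + 1) * L / 2).
  { apply Rle_trans with ((exp L + 1/L) * (L^2/2)).
    - apply Rmult_le_compat_l; [|exact Hq]. assert (0 < 1/L) by (apply Rdiv_lt_0_compat; lra). lra.
    - right. field. lra. }
  assert (P1' : (exp L * L + 1) * L / 2 <= (1 / U5 (13/256) * (13/256) + 1) * (13/256) / 2).
  { assert (exp L * L <= 1 / U5 (13/256) * (13/256)) by (apply Rmult_le_compat; lra).
    assert (0 < exp L * L) by (apply Rmult_lt_0_compat; lra).
    assert ((exp L * L + 1) * L <= (1 / U5 (13/256) * (13/256) + 1) * (13/256))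
      by (apply Rmult_le_compat; lra).
    lra. }
  assert (P2 : exp (L - 1) <= 1 / T6 (243/256)).
  { apply Rle_trans with (exp (-(243/256))); [apply exp_le_mono; lra | apply expneg_le_inv_T6; lra]. }
  assert (P3 := expm1_mul_ln_inv L ltac:(lra)).
  assert (P4 : 0 <= ln (1 + L)) by (apply ln_nonneg; lra).
  assert (Num : (1 / U5 (13/256) * (13/256) + 1) * (13/256) / 2 + 1 / T6 (243/256)
                <= excess_bound_const) by numc.
  lra.
Qed.

(* Certificate for an interval [a, b] inside (0, 1], from the small form:
   Rb >= e^b, l1 >= ln(b + e^{-b}), na >= ln(1/a), la1 <= ln(1 + a). *)
Lemma excess_small_cert a b Rb l1 na la1 : 0 < a <= b -> b <= 1 -> 0 < U5 b -> 1 <= Rb * U5 b ->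
  0 <= l1 -> b + U4 b <= T6 l1 ->
  0 <= na -> 1 <= a * T6 na ->
  0 <= la1 -> 0 < U5 la1 -> 1 <= (1 + a) * U5 la1 ->
  (Rb + 1/a) * l1 + (Rb - 1) * na - la1 <= excess_bound_const ->
  forall L, a <= L <= b -> excess L <= excess_bound_const.
Proof.
  intros Hab Hb1 HU HRb Hl1 Hl1c Hna Hnac Hla1 HU2 Hla1c Hc L HL.
  rewrite excess_small_form by lra.
  assert (HeL : exp L <= Rb).
  { apply Rle_trans with (exp b); [apply exp_le_mono; lra|].
    apply Rle_trans with (1 / U5 b); [apply exp_le_inv_U5; lra|].
    apply (Rmult_le_reg_r (U5 b)); [exact HU|].
    replace (1 / U5 b * U5 b) with 1 by (field; lra). lra. }
  assert (HeL1 : 1 <= exp L) by (apply exp_ge1; lra).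
  assert (Hq : ln (L + exp (-L)) <= l1).
  { apply ln_le_of_T6; [generalize (L_plus_expneg_ge1 L ltac:(lra)); lra | exact Hl1|].
    apply Rle_trans with (b + exp (-b)); [apply L_plus_expneg_mono; lra|].
    generalize (expneg_U4 b ltac:(lra)). lra. }
  assert (Hq0 : 0 <= ln (L + exp (-L))) by (apply ln_nonneg, L_plus_expneg_ge1; lra).
  assert (HinvL : 1/L <= 1/a).
  { unfold Rdiv. rewrite !Rmult_1_l. apply Rinv_le_contravar; lra. }
  assert (HinvL0 : 0 < 1/L) by (apply Rdiv_lt_0_compat; lra).
  assert (Hna' : - ln L <= na).
  { assert (ln a <= ln L) by (apply ln_le_mono; lra).
    assert (ln (1/a) <= na).
    { apply ln_le_of_T6; [apply Rdiv_lt_0_compat; lra | exact Hna|].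
      apply (Rmult_le_reg_l a); [lra|]. replace (a * (1/a)) with 1 by (field; lra). lra. }
    assert (E : ln (1/a) = - ln a) by (unfold Rdiv; rewrite Rmult_1_l; apply ln_Rinv; lra).
    lra. }
  assert (Hna0 : 0 <= - ln L) by (generalize (ln_nonpos L ltac:(lra) ltac:(lra)); lra).
  assert (H1a : la1 <= ln (1 + L)).
  { apply Rle_trans with (ln (1 + a)); [apply ln_ge_of_U5; lra | apply ln_le_mono; lra]. }
  assert (P1 : (exp L + 1/L) * ln (L + exp (-L)) <= (Rb + 1/a) * l1) by (apply Rmult_le_compat; lra).
  assert (P2 : (exp L - 1) * (- ln L) <= (Rb - 1) * na) by (apply Rmult_le_compat; lra).
  lra.
Qed.

(* Certificate for an interval [a, b], from the large form:
   la >= ln a, P >= psi(1/(a T6(a))) (via zP), t <= ln(1 + 1/a); the resulting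
   bound on L * excess L is affine in L and is checked at both ends. *)
Lemma excess_large_cert a b la zP P t : 0 < a <= b -> ln a <= la ->
  0 <= zP -> 1 <= zP * (a * T6 a) -> psi zP <= P ->
  0 <= t -> 0 < U5 t -> 1 <= (1 + 1/a) * U5 t ->
  1 + P + la - a * t <= excess_bound_const * a ->
  1 + P + la + (b-a)/a - a * t <= excess_bound_const * b ->
  forall L, a <= L <= b -> excess L <= excess_bound_const.
Proof.
  intros Hab Hla HzP HzPc HP Ht HUt Htc H1 H2 L HL.
  assert (HL0 : 0 < L) by lra.
  assert (HT6 : 1 <= T6 a) by (apply T6_ge1; lra).
  assert (Hu : a * T6 a <= exp L * L).
  { assert (T6 a <= exp L) by (apply Rle_trans with (exp a); [apply exp_T6; lra | apply exp_le_mono; lra]).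
    rewrite (Rmult_comm (exp L) L). apply Rmult_le_compat; lra. }
  assert (Hpsi : psi (1/(exp L * L)) <= P).
  { apply Rle_trans with (psi zP); [apply psi_mono; split|exact HP].
    - left; apply Rdiv_lt_0_compat; nra.
    - apply (Rmult_le_reg_r (exp L * L)); [nra|].
      replace (1 / (exp L * L) * (exp L * L)) with 1 by (field; split; [lra | apply Rgt_not_eq, exp_pos]).
      apply Rle_trans with (zP * (a * T6 a)); [exact HzPc | apply Rmult_le_compat_l; lra]. }
  assert (Hpu := ln_1p_inv_pade (exp L * L) ltac:(nra)).
  assert (Hln := ln_tangent a L ltac:(lra) HL0).
  assert (Hhm := hh_mono a L ltac:(lra)).
  assert (Hh : a * t <= hh a).
  { unfold hh. apply Rmult_le_compat_l; [lra|]. apply ln_ge_of_U5; auto.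
    assert (0 < 1/a) by (apply Rdiv_lt_0_compat; lra). lra. }
  assert (HK := excess_large_form L HL0).
  assert (Hlin := affine_below_on_interval a b (1 + P + la - a * t) excess_bound_const L
                    ltac:(lra) HL H1 ltac:(lra)).
  apply (Rmult_le_reg_l L); lra.
Qed.

(* For L >= 6: ln L <= L/e and L ln(1 + 1/L) >= 0.9. *)
Lemma excess_bound_far L : 6 <= L -> excess L <= excess_bound_const.
Proof.
  intros HL. assert (HL0 : 0 < L) by lra.
  assert (HK := excess_large_form L HL0).
  assert (He1 : 1 <= exp L) by (apply exp_ge1; lra).
  assert (Hu : 1 <= exp L * L) by nra.
  assert (Hpu := ln_1p_inv_pade (exp L * L) ltac:(lra)).
  assert (Hpsi : psi (1/(exp L * L)) <= psi 1).
  { apply psi_mono. split; [left; apply Rdiv_lt_0_compat; lra|].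
    apply (Rmult_le_reg_r (exp L * L)); [lra|]. field_simplify; lra. }
  assert (Hp1 : psi 1 = 4/10) by (unfold psi; field).
  assert (Hln : ln L <= L * (368/1000)).
  { assert (HeT : T6 1 <= exp 1) by (apply exp_T6; lra).
    assert (Hd : L / exp 1 <= L * (1 / T6 1)).
    { unfold Rdiv. rewrite Rmult_1_l. apply Rmult_le_compat_l; [lra|].
      apply Rinv_le_contravar; [generalize (T6_ge1 1 ltac:(lra)); lra | exact HeT]. }
    assert (1 / T6 1 <= 368/1000) by numc.
    generalize (ln_le_div_e L HL0). nra. }
  assert (Hh : 9/10 <= hh L).
  { apply Rle_trans with (hh 6); [|apply hh_mono; lra].
    unfold hh. generalize (ln_1p_inv_lo 6 ltac:(lra)). unfold artanh_lo. lra. }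
  apply (Rmult_le_reg_l L); [lra|]. unfold excess_bound_const. lra.
Qed.

Ltac small_cert a b Rb l1 na la1 :=
  apply (excess_small_cert a b Rb l1 na la1); [numc.. | lra].
Ltac ln_cert := first [apply ln_le_of_T6; numc | apply ln_le_of_U5; numc].
Ltac large_cert a b la zP P t :=
  apply (excess_large_cert a b la zP P t); [numc | ln_cert | numc.. | lra].

Lemma excess_bound_lower_middle L : 13/256 <= L <= 154/256 -> excess L <= excess_bound_const.
Proof.
  intros HL.
  destruct (Rle_dec L (15/128)); [small_cert (13/256) (15/128) (9211/8192) (27/4096) (6175/2048) (811/16384) |].
  destruct (Rle_dec L (47/256)); [small_cert (15/128) (47/256) (9843/8192) (129/8192) (35237/16384) (1815/16384) |].
  destruct (Rle_dec L (31/128)); [small_cert (47/256) (31/128) (10437/8192) (439/16384) (13901/8192) (2761/16384) |].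
  destruct (Rle_dec L (75/256)); [small_cert (31/128) (75/256) (10981/8192) (157/4096) (23245/16384) (3553/16384) |].
  destruct (Rle_dec L (43/128)); [small_cert (75/256) (43/128) (11463/8192) (405/8192) (2515/2048) (4209/16384) |].
  destruct (Rle_dec L (3/8)); [small_cert (43/128) (3/8) (23839/16384) (991/16384) (17875/16384) (4745/16384) |].
  destruct (Rle_dec L (105/256)); [small_cert (3/8) (105/256) (6173/4096) (1167/16384) (2009/2048) (5217/16384) |].
  destruct (Rle_dec L (113/256)); [small_cert (105/256) (113/256) (6369/4096) (333/4096) (14603/16384) (5631/16384) |].
  destruct (Rle_dec L (15/32)); [small_cert (113/256) (15/32) (26183/16384) (1483/16384) (1675/2048) (2995/8192) |].
  destruct (Rle_dec L (63/128)); [small_cert (15/32) (63/128) (6701/4096) (1617/16384) (12415/16384) (3149/8192) |].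
  destruct (Rle_dec L (33/64)); [small_cert (63/128) (33/64) (1715/1024) (1755/16384) (11615/16384) (6557/16384) |].
  destruct (Rle_dec L (137/256)); [small_cert (33/64) (137/256) (27981/16384) (1873/16384) (10853/16384) (1703/4096) |].
  destruct (Rle_dec L (71/128)); [small_cert (137/256) (71/128) (28533/16384) (1993/16384) (2561/4096) (3511/8192) |].
  destruct (Rle_dec L (147/256)); [small_cert (71/128) (147/256) (29097/16384) (529/4096) (1207/2048) (7229/16384) |].
  destruct (Rle_dec L (151/256)); [small_cert (147/256) (151/256) (29555/16384) (277/2048) (9089/16384) (3717/8192) |].
  destruct (Rle_dec L (77/128)); [small_cert (151/256) (77/128) (1869/1024) (573/4096) (4325/8192) (7595/16384) |].
  lra.
Qed.

Lemma excess_bound_upper_middle L : 154/256 <= L <= 6 -> excess L <= excess_bound_const.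
Proof.
  intros HL.
  destruct (Rle_dec L (157/256)); [large_cert (77/128) (157/256) (-4163/8192) (14925/16384) (6053/16384) (15997/16384) |].
  destruct (Rle_dec L (5/8)); [large_cert (157/256) (5/8) (-4005/8192) (14469/16384) (5895/16384) (3951/4096) |].
  destruct (Rle_dec L (163/256)); [large_cert (5/8) (163/256) (-1925/4096) (877/1024) (2871/8192) (61/64) |].
  destruct (Rle_dec L (83/128)); [large_cert (163/256) (83/128) (-7395/16384) (13613/16384) (2797/8192) (1929/2048) |].
  destruct (Rle_dec L (169/256)); [large_cert (83/128) (169/256) (-7097/16384) (3303/4096) (1363/4096) (15253/16384) |].
  destruct (Rle_dec L (43/64)); [large_cert (169/256) (43/64) (-6803/16384) (6413/8192) (2657/8192) (7539/8192) |].
  destruct (Rle_dec L (175/256)); [large_cert (43/64) (175/256) (-6515/16384) (12455/16384) (5181/16384) (14907/16384) |].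
  destruct (Rle_dec L (89/128)); [large_cert (175/256) (89/128) (-779/2048) (12099/16384) (1263/4096) (3685/4096) |].
  destruct (Rle_dec L (181/256)); [large_cert (89/128) (181/256) (-5953/16384) (11757/16384) (77/256) (7289/8192) |].
  destruct (Rle_dec L (23/32)); [large_cert (181/256) (23/32) (-5679/16384) (11427/16384) (4807/16384) (7209/8192) |].
  destruct (Rle_dec L (187/256)); [large_cert (23/32) (187/256) (-2705/8192) (5555/8192) (4691/16384) (14263/16384) |].
  destruct (Rle_dec L (95/128)); [large_cert (187/256) (95/128) (-5145/16384) (10805/16384) (2289/8192) (14111/16384) |].
  destruct (Rle_dec L (193/256)); [large_cert (95/128) (193/256) (-1221/4096) (5255/8192) (1117/4096) (6981/8192) |].
  destruct (Rle_dec L (49/64)); [large_cert (193/256) (49/64) (-1157/4096) (5113/8192) (2181/8192) (1727/2048) |].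
  destruct (Rle_dec L (199/256)); [large_cert (49/64) (199/256) (-4375/16384) (311/512) (4259/16384) (6837/8192) |].
  destruct (Rle_dec L (101/128)); [large_cert (199/256) (101/128) (-2063/8192) (1211/2048) (65/256) (6767/8192) |].
  destruct (Rle_dec L (205/256)); [large_cert (101/128) (205/256) (-3881/16384) (9433/16384) (4063/16384) (6699/8192) |].
  destruct (Rle_dec L (13/16)); [large_cert (205/256) (13/16) (-3639/16384) (9187/16384) (3969/16384) (829/1024) |].
  destruct (Rle_dec L (211/256)); [large_cert (13/16) (211/256) (-3401/16384) (8949/16384) (1939/8192) (13133/16384) |].
  destruct (Rle_dec L (107/128)); [large_cert (211/256) (107/128) (-3167/16384) (8719/16384) (3789/16384) (13005/16384) |].
  destruct (Rle_dec L (217/256)); [large_cert (107/128) (217/256) (-367/2048) (8497/16384) (3703/16384) (12879/16384) |].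
  destruct (Rle_dec L (55/64)); [large_cert (217/256) (55/64) (-2707/16384) (8281/16384) (3619/16384) (3189/4096) |].
  destruct (Rle_dec L (223/256)); [large_cert (55/64) (223/256) (-1241/8192) (8073/16384) (1769/8192) (12635/16384) |].
  destruct (Rle_dec L (113/128)); [large_cert (223/256) (113/128) (-2261/16384) (123/256) (3459/16384) (12517/16384) |].
  destruct (Rle_dec L (229/256)); [large_cert (113/128) (229/256) (-1021/8192) (7677/16384) (1691/8192) (12401/16384) |].
  destruct (Rle_dec L (29/32)); [large_cert (229/256) (29/32) (-913/8192) (117/256) (3307/16384) (12287/16384) |].
  destruct (Rle_dec L (235/256)); [large_cert (29/32) (235/256) (-403/4096) (7305/16384) (3235/16384) (12175/16384) |].
  destruct (Rle_dec L (119/128)); [large_cert (235/256) (119/128) (-701/8192) (891/2048) (791/4096) (12065/16384) |].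
  destruct (Rle_dec L (241/256)); [large_cert (119/128) (241/256) (-597/8192) (1739/4096) (3095/16384) (5979/8192) |].
  destruct (Rle_dec L (61/64)); [large_cert (241/256) (61/64) (-989/16384) (3395/8192) (757/4096) (2963/4096) |].
  destruct (Rle_dec L (123/128)); [large_cert (61/64) (123/128) (-393/8192) (1657/4096) (2963/16384) (2937/4096) |].
  destruct (Rle_dec L (31/32)); [large_cert (123/128) (31/32) (-163/4096) (6523/16384) (365/2048) (365/512) |].
  destruct (Rle_dec L (125/128)); [large_cert (31/32) (125/128) (-65/2048) (1605/4096) (1439/8192) (11613/16384) |].
  destruct (Rle_dec L (63/64)); [large_cert (125/128) (63/64) (-97/4096) (6319/16384) (2837/16384) (5773/8192) |].
  destruct (Rle_dec L (127/128)); [large_cert (63/64) (127/128) (-129/8192) (1555/4096) (699/4096) (11481/16384) |].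
  destruct (Rle_dec L (1)); [large_cert (127/128) (1) (-1/128) (6123/16384) (2757/16384) (1427/2048) |].
  destruct (Rle_dec L (129/128)); [large_cert (1) (129/128) (0) (1507/4096) (1359/8192) (11351/16384) |].
  destruct (Rle_dec L (65/64)); [large_cert (129/128) (65/64) (1/128) (5935/16384) (2679/16384) (1411/2048) |].
  destruct (Rle_dec L (131/128)); [large_cert (65/64) (131/128) (255/16384) (1461/4096) (1321/8192) (11225/16384) |].
  destruct (Rle_dec L (33/32)); [large_cert (131/128) (33/32) (95/4096) (2877/8192) (2605/16384) (11163/16384) |].
  destruct (Rle_dec L (133/128)); [large_cert (33/32) (133/128) (505/16384) (2833/8192) (321/2048) (5551/8192) |].
  destruct (Rle_dec L (67/64)); [large_cert (133/128) (67/64) (157/4096) (1395/4096) (633/4096) (11041/16384) |].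
  destruct (Rle_dec L (135/128)); [large_cert (67/64) (135/128) (751/16384) (5495/16384) (2497/16384) (10981/16384) |].
  destruct (Rle_dec L (17/16)); [large_cert (135/128) (17/16) (873/16384) (1353/4096) (1231/8192) (5461/8192) |].
  destruct (Rle_dec L (137/128)); [large_cert (17/16) (137/128) (497/8192) (2665/8192) (607/4096) (10863/16384) |].
  destruct (Rle_dec L (69/64)); [large_cert (137/128) (69/64) (557/8192) (2625/8192) (1197/8192) (5403/8192) |].
  destruct (Rle_dec L (139/128)); [large_cert (69/64) (139/128) (1233/16384) (1293/4096) (1181/8192) (2687/4096) |].
  destruct (Rle_dec L (35/32)); [large_cert (139/128) (35/32) (1351/16384) (2547/8192) (2329/16384) (10691/16384) |].
  destruct (Rle_dec L (141/128)); [large_cert (35/32) (141/128) (1469/16384) (5019/16384) (2297/16384) (10635/16384) |].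
  destruct (Rle_dec L (71/64)); [large_cert (141/128) (71/64) (1585/16384) (309/1024) (2265/16384) (2645/4096) |].
  destruct (Rle_dec L (285/256)); [large_cert (71/64) (285/256) (1701/16384) (4871/16384) (2235/16384) (10525/16384) |].
  destruct (Rle_dec L (143/128)); [large_cert (285/256) (143/128) (1759/16384) (4835/16384) (2219/16384) (5249/8192) |].
  destruct (Rle_dec L (287/256)); [large_cert (143/128) (287/256) (227/2048) (75/256) (551/4096) (10471/16384) |].
  destruct (Rle_dec L (9/8)); [large_cert (287/256) (9/8) (1873/16384) (1191/4096) (2189/16384) (2611/4096) |].
  destruct (Rle_dec L (289/256)); [large_cert (9/8) (289/256) (965/8192) (4729/16384) (1087/8192) (10417/16384) |].
  destruct (Rle_dec L (145/128)); [large_cert (289/256) (145/128) (1987/16384) (4695/16384) (135/1024) (5195/8192) |].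
  destruct (Rle_dec L (291/256)); [large_cert (145/128) (291/256) (511/4096) (1165/4096) (2145/16384) (2591/4096) |].
  destruct (Rle_dec L (73/64)); [large_cert (291/256) (73/64) (525/4096) (2313/8192) (1065/8192) (10337/16384) |].
  destruct (Rle_dec L (293/256)); [large_cert (73/64) (293/256) (539/4096) (287/1024) (529/4096) (10311/16384) |].
  destruct (Rle_dec L (147/128)); [large_cert (293/256) (147/128) (553/4096) (4559/16384) (1051/8192) (10285/16384) |].
  destruct (Rle_dec L (295/256)); [large_cert (147/128) (295/256) (567/4096) (2263/8192) (261/2048) (10259/16384) |].
  destruct (Rle_dec L (37/32)); [large_cert (295/256) (37/32) (581/4096) (4493/16384) (2073/16384) (10233/16384) |].
  destruct (Rle_dec L (297/256)); [large_cert (37/32) (297/256) (2379/16384) (1115/4096) (2059/16384) (319/512) |].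
  destruct (Rle_dec L (149/128)); [large_cert (297/256) (149/128) (1217/8192) (1107/4096) (2045/16384) (5091/8192) |].
  destruct (Rle_dec L (299/256)); [large_cert (149/128) (299/256) (2489/16384) (1099/4096) (127/1024) (10157/16384) |].
  destruct (Rle_dec L (75/64)); [large_cert (299/256) (75/64) (159/1024) (1091/4096) (1009/8192) (10131/16384) |].
  destruct (Rle_dec L (301/256)); [large_cert (75/64) (301/256) (2599/16384) (4333/16384) (2005/16384) (5053/8192) |].
  destruct (Rle_dec L (151/128)); [large_cert (301/256) (151/128) (1327/8192) (4301/16384) (1991/16384) (10081/16384) |].
  destruct (Rle_dec L (303/256)); [large_cert (151/128) (303/256) (677/4096) (2135/8192) (1977/16384) (1257/2048) |].
  destruct (Rle_dec L (19/16)); [large_cert (303/256) (19/16) (1381/8192) (265/1024) (1965/16384) (10031/16384) |].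
  destruct (Rle_dec L (305/256)); [large_cert (19/16) (305/256) (11/64) (4209/16384) (1951/16384) (10007/16384) |].
  destruct (Rle_dec L (153/128)); [large_cert (305/256) (153/128) (1435/8192) (4179/16384) (969/8192) (4991/8192) |].
  destruct (Rle_dec L (307/256)); [large_cert (153/128) (307/256) (731/4096) (4149/16384) (1925/16384) (4979/8192) |].
  destruct (Rle_dec L (77/64)); [large_cert (307/256) (77/64) (2977/16384) (515/2048) (1913/16384) (9933/16384) |].
  destruct (Rle_dec L (309/256)); [large_cert (77/64) (309/256) (1515/8192) (2045/8192) (475/4096) (9909/16384) |].
  destruct (Rle_dec L (155/128)); [large_cert (309/256) (155/128) (3083/16384) (4061/16384) (1887/16384) (9885/16384) |].
  destruct (Rle_dec L (311/256)); [large_cert (155/128) (311/256) (49/256) (63/256) (937/8192) (9861/16384) |].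
  destruct (Rle_dec L (39/32)); [large_cert (311/256) (39/32) (3189/16384) (1001/4096) (931/8192) (9837/16384) |].
  destruct (Rle_dec L (313/256)); [large_cert (39/32) (313/256) (1621/8192) (3975/16384) (925/8192) (4907/8192) |].
  destruct (Rle_dec L (157/128)); [large_cert (313/256) (157/128) (1647/8192) (3947/16384) (1837/16384) (4895/8192) |].
  destruct (Rle_dec L (315/256)); [large_cert (157/128) (315/256) (1673/8192) (3919/16384) (1825/16384) (9767/16384) |].
  destruct (Rle_dec L (79/64)); [large_cert (315/256) (79/64) (1699/8192) (973/4096) (1813/16384) (9743/16384) |].
  destruct (Rle_dec L (317/256)); [large_cert (79/64) (317/256) (1725/8192) (483/2048) (1801/16384) (1215/2048) |].
  destruct (Rle_dec L (159/128)); [large_cert (317/256) (159/128) (1751/8192) (3837/16384) (1789/16384) (9697/16384) |].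
  destruct (Rle_dec L (319/256)); [large_cert (159/128) (319/256) (1777/8192) (1905/8192) (889/8192) (4837/8192) |].
  destruct (Rle_dec L (5/4)); [large_cert (319/256) (5/4) (3605/16384) (3783/16384) (883/8192) (9651/16384) |].
  destruct (Rle_dec L (321/256)); [large_cert (5/4) (321/256) (457/2048) (3757/16384) (877/8192) (2407/4096) |].
  destruct (Rle_dec L (161/128)); [large_cert (321/256) (161/128) (927/4096) (3731/16384) (1743/16384) (4803/8192) |].
  destruct (Rle_dec L (323/256)); [large_cert (161/128) (323/256) (3759/16384) (3705/16384) (433/4096) (9583/16384) |].
  destruct (Rle_dec L (325/256)); [large_cert (323/256) (325/256) (3809/16384) (3679/16384) (215/2048) (9561/16384) |].
  destruct (Rle_dec L (327/256)); [large_cert (325/256) (327/256) (3911/16384) (907/4096) (849/8192) (2379/4096) |].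
  destruct (Rle_dec L (329/256)); [large_cert (327/256) (329/256) (4011/16384) (1789/8192) (419/4096) (37/64) |].
  destruct (Rle_dec L (331/256)); [large_cert (329/256) (331/256) (4111/16384) (441/2048) (827/8192) (2357/4096) |].
  destruct (Rle_dec L (333/256)); [large_cert (331/256) (333/256) (2105/8192) (435/2048) (1633/16384) (9385/16384) |].
  destruct (Rle_dec L (335/256)); [large_cert (333/256) (335/256) (4309/16384) (429/2048) (1611/16384) (4671/8192) |].
  destruct (Rle_dec L (337/256)); [large_cert (335/256) (337/256) (4407/16384) (3385/16384) (1591/16384) (9299/16384) |].
  destruct (Rle_dec L (339/256)); [large_cert (337/256) (339/256) (4505/16384) (3339/16384) (785/8192) (9257/16384) |].
  destruct (Rle_dec L (341/256)); [large_cert (339/256) (341/256) (4601/16384) (3293/16384) (775/8192) (9215/16384) |].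
  destruct (Rle_dec L (343/256)); [large_cert (341/256) (343/256) (2349/8192) (203/1024) (765/8192) (4587/8192) |].
  destruct (Rle_dec L (173/128)); [large_cert (343/256) (173/128) (2397/8192) (801/4096) (755/8192) (9133/16384) |].
  destruct (Rle_dec L (349/256)); [large_cert (173/128) (349/256) (617/2048) (785/4096) (741/8192) (567/1024) |].
  destruct (Rle_dec L (11/8)); [large_cert (349/256) (11/8) (2539/8192) (3077/16384) (1453/16384) (2253/4096) |].
  destruct (Rle_dec L (355/256)); [large_cert (11/8) (355/256) (2609/8192) (3015/16384) (713/8192) (8953/16384) |].
  destruct (Rle_dec L (359/256)); [large_cert (355/256) (359/256) (5357/16384) (2955/16384) (1399/16384) (8895/16384) |].
  destruct (Rle_dec L (363/256)); [large_cert (359/256) (363/256) (5541/16384) (2877/16384) (341/4096) (4409/8192) |].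
  destruct (Rle_dec L (23/16)); [large_cert (363/256) (23/16) (2861/8192) (2801/16384) (1329/16384) (8743/16384) |].
  destruct (Rle_dec L (187/128)); [large_cert (23/16) (187/128) (2973/8192) (1355/8192) (161/2048) (8651/16384) |].
  destruct (Rle_dec L (381/256)); [large_cert (187/128) (381/256) (6211/16384) (2605/16384) (1241/16384) (4271/8192) |].
  destruct (Rle_dec L (195/128)); [large_cert (381/256) (195/128) (6515/16384) (311/2048) (1187/16384) (2105/4096) |].
  destruct (Rle_dec L (401/256)); [large_cert (195/128) (401/256) (3449/8192) (2347/16384) (1123/16384) (8267/16384) |].
  destruct (Rle_dec L (13/8)); [large_cert (401/256) (13/8) (7353/16384) (2187/16384) (1049/16384) (1011/2048) |].
  destruct (Rle_dec L (439/256)); [large_cert (13/8) (439/256) (7955/16384) (1989/16384) (479/8192) (491/1024) |].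
  destruct (Rle_dec L (483/256)); [large_cert (439/256) (483/256) (8837/16384) (431/4096) (417/8192) (3763/8192) |].
  destruct (Rle_dec L (159/64)); [large_cert (483/256) (159/64) (5201/8192) (1321/16384) (161/4096) (6967/16384) |].
  destruct (Rle_dec L (6)); [large_cert (159/64) (6) (14911/16384) (279/8192) (69/4096) (2771/8192) |].
  lra.
Qed.

Lemma excess_bound L : 0 < L -> excess L <= excess_bound_const.
Proof.
  intros HL.
  destruct (Rle_dec L (13/256)); [apply excess_bound_near0; lra|].
  destruct (Rle_dec L (154/256)); [apply excess_bound_lower_middle; lra|].
  destruct (Rle_dec L 6); [apply excess_bound_upper_middle; lra|].
  apply excess_bound_far; lra.
Qed.

(* With stir k = ln k! - (k + 1/2) ln k + k,
   each step decreases stir by at most 1/(12k) - 1/(12(k+1)), so for k >= 2,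
   stir k >= stir 2 - 1/24; this gives the constant cS = 2 - 3/2 ln 2 - 1/24. *)
Definition stir (k : nat) := lnfact k - (INR k + 1/2) * ln (INR k) + INR k.
Definition cS := 2 - 3/2 * ln 2 - 1/24.

(* With y = 1/(2k+1) this reads (k + 1/2) ln(1 + 1/k) - 1 <= 1/(12k) - 1/(12(k+1)). *)
Lemma artanh_hi_stirling_gap y : 0 < y < 1 -> (1/(2*y)) * artanh_hi y - 1 <= y^2/(3*(1-y^2)).
Proof.
  intros Hy. unfold artanh_hi.
  assert (E : 1 / (2 * y) * (2 * (y + y ^ 3 / 3 + y ^ 5 / 5) + 2 * y ^ 7 / (7 * (1 - y ^ 2))) - 1
     - y ^ 2 / (3 * (1 - y ^ 2)) = - (2/15 * y^4 + 2/35 * y^6) / (1 - y^2)) by (field; split; nra).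
  assert (0 <= (2/15 * y^4 + 2/35 * y^6) / (1 - y^2)).
  { apply Rmult_le_pos; [|left; apply Rinv_0_lt_compat; nra].
    assert (0 <= y^4) by (apply pow_le; lra). assert (0 <= y^6) by (apply pow_le; lra). lra. }
  lra.
Qed.

Lemma stir_step k : (1 <= k)%nat ->
  stir (S k) >= stir k - (1/(12 * INR k) - 1/(12 * INR (S k))).
Proof.
  intros Hk. unfold stir. rewrite lnfact_S, S_INR.
  assert (Hk1 : 1 <= INR k) by (apply (le_INR 1); auto).
  assert (H := ln_1p_inv_hi (INR k) ltac:(lra)).
  rewrite <- ln_succ in H by lra.
  set (y := 1/(2 * INR k + 1)) in *.
  assert (Hy : 0 < y < 1).
  { unfold y. split; [apply Rdiv_lt_0_compat; lra|].
    apply (Rmult_lt_reg_r (2 * INR k + 1)); [lra|]. field_simplify; lra. }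
  assert (Hp := artanh_hi_stirling_gap y Hy).
  assert (E1 : 1/(2*y) = INR k + 1/2) by (unfold y; field; lra).
  assert (E2 : y^2/(3*(1-y^2)) = 1/(12 * INR k) - 1/(12 * (INR k + 1))).
  { unfold y. field. repeat split; nra. }
  rewrite E1, E2 in Hp.
  assert ((INR k + 1/2) * (ln (INR k + 1) - ln (INR k)) <= (INR k + 1/2) * artanh_hi y)
    by (apply Rmult_le_compat_l; lra).
  lra.
Qed.

Lemma stir_lower k : (2 <= k)%nat -> stir k >= stir 2 - 1/24 + 1/(12 * INR k).
Proof.
  induction k as [|k IH]; intros Hk; [lia|].
  destruct (Nat.eq_dec k 1) as [->|Hne]; [simpl INR; lra|].
  generalize (IH ltac:(lia)) (stir_step k ltac:(lia)). lra.
Qed.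

Lemma stirling k : (1 <= k)%nat ->
  INR k * ln (INR k) - lnfact (k - 1) - 1/2 * ln (INR k) <= INR k - cS.
Proof.
  intros Hk.
  assert (E : lnfact (k - 1) = lnfact k - ln (INR k)).
  { destruct k as [|k]; [lia|]. rewrite lnfact_S. replace (S k - 1)%nat with k by lia. ring. }
  rewrite E. enough (stir k >= cS) by (unfold stir in *; lra).
  destruct (Nat.eq_dec k 1) as [->|Hne].
  - unfold stir, cS, lnfact. simpl. rewrite ln_1. generalize ln2_lo. lra.
  - assert (H := stir_lower k ltac:(lia)).
    assert (E2 : stir 2 = 2 - 3/2 * ln 2).
    { unfold stir, lnfact. simpl. rewrite ln_1. replace (1 + 1) with 2 by ring. lra. }
    assert (0 < 1/(12 * INR k)).
    { apply Rdiv_lt_0_compat; [lra|]. assert (1 <= INR k) by (apply (le_INR 1); auto). lra. }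
    unfold cS. lra.
Qed.

(* Trapezoid-type bound: sum_{t<n} ln(t+b) <= T(n) - T(0) with
   T(n) = (n + b - 1/2) ln(n + b) - n, since (a + 1/2) ln(1 + 1/a) >= 1. *)
Definition trapezoid_bound (n : nat) (b : R) :=
  (INR n + b - 1/2) * ln (INR n + b) - INR n - (b - 1/2) * ln b.

Lemma sum_ln_shift_le n b : 0 < b -> rsum (seq 0 n) (fun t => ln (INR t + b)) <= trapezoid_bound n b.
Proof.
  intros Hb. induction n as [|n IH].
  - unfold trapezoid_bound. simpl. rewrite Rplus_0_l. lra.
  - rewrite seq_S, rsum_app, rsum_cons, rsum_nil, Nat.add_0_l.
    enough (ln (INR n + b) <= trapezoid_bound (S n) b - trapezoid_bound n b) by lra.
    unfold trapezoid_bound. rewrite S_INR.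
    assert (Ha : 0 < INR n + b) by (generalize (pos_INR n); lra).
    set (a := INR n + b) in *. replace (INR n + 1 + b) with (a + 1) by (unfold a; ring).
    assert (H := ln_1p_inv_lo a Ha). rewrite <- ln_succ in H by lra.
    assert (Hat : 2 * (1/(2 * a + 1)) <= artanh_lo (1/(2 * a + 1))).
    { unfold artanh_lo. set (y := 1/(2 * a + 1)).
      assert (0 < y) by (unfold y; apply Rdiv_lt_0_compat; lra).
      assert (0 <= y^3) by (apply pow_le; lra). assert (0 <= y^5) by (apply pow_le; lra).
      assert (0 <= y^7) by (apply pow_le; lra). lra. }
    assert (1 <= (a + 1/2) * (ln (a + 1) - ln a)).
    { apply Rle_trans with ((a + 1/2) * (2 * (1 / (2 * a + 1)))).
      - right. field. lra.
      - apply Rmult_le_compat_l; lra. }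
    nra.
Qed.

End AnalyticBounds.
Import AnalyticBounds.

Lemma ln_S_cond_step K x w beta t :
  Forall (fun a => (a < K)%nat) x -> valid_weights K x w -> 0 < beta -> (t < length x)%nat ->
  let c := cnt x t (sym x t) in
  0 < S_cond beta w x t (sym x t) /\
  ln (S_cond beta w x t (sym x t)) =
    ln beta * is_new c - (if Nat.eqb c 0 then ln (1 / w t (sym x t)) else 0)
    + old_log c - ln (INR t + beta).
Proof.
  intros Hx Hw Hb Ht c.
  assert (Htb : 0 < INR t + beta) by (generalize (pos_INR t); lra).
  unfold S_cond, is_new, old_log. fold c.
  destruct c as [|k] eqn:Ec; cbn [Nat.ltb Nat.leb Nat.eqb].
  - destruct (Hw t ltac:(lia)) as [Hpos _].
    assert (Hwp : 0 < w t (sym x t)) by (apply Hpos; [apply (sym_lt K); auto | exact Ec]).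
    split; [apply Rdiv_lt_0_compat; [apply Rmult_lt_0_compat|]; lra|].
    unfold Rdiv. rewrite Rmult_1_l, !ln_mult, !ln_Rinv
      by (try apply Rinv_0_lt_compat; try apply Rmult_lt_0_compat; lra). ring.
  - assert (0 < INR (S k)) by (apply lt_0_INR; lia).
    split; [apply Rdiv_lt_0_compat; lra|].
    unfold Rdiv. rewrite ln_mult, ln_Rinv by (try apply Rinv_0_lt_compat; lra). ring.
Qed.

Lemma ln_S_beta K x w beta : Forall (fun a => (a < K)%nat) x -> valid_weights K x w -> 0 < beta ->
  ln (S_beta beta w x) = INR (msize K x) * ln beta - CL w x
     + symbol_sum K (fun k => lnfact (k - 1)) x
     - rsum (seq 0 (length x)) (fun t => ln (INR t + beta)).
Proof.
  intros Hx Hw Hb. unfold S_beta.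
  assert (Hstep : forall t, In t (seq 0 (length x)) -> _)
    by (intros t Ht; apply in_seq in Ht; exact (ln_S_cond_step K x w beta t Hx Hw Hb ltac:(lia))).
  destruct (ln_rprod (seq 0 (length x)) (fun t => S_cond beta w x t (sym x t))) as [_ ->].
  { intros t Ht. apply (Hstep t Ht). }
  rewrite (rsum_ext_in _ _ _ (fun t Ht => proj2 (Hstep t Ht))).
  rewrite <- old_log_symbol_sum, msize_step_sum by exact Hx.
  unfold Rminus, step_sum, CL. rewrite !rsum_plus, !rsum_opp, rsum_scal, rsum_filter. ring.
Qed.

Lemma ln_S_inf K x w : Forall (fun a => (a < K)%nat) x -> valid_weights K x w ->
  msize K x = length x -> ln (S_inf w x) = - CL w x.
Proof.
  intros Hx Hw Hm. unfold S_inf, CL.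
  assert (Hnew := all_steps_new K x Hx Hm).
  assert (Hstep : forall t, In t (seq 0 (length x)) ->
            0 < S_inf_cond w x t (sym x t) /\ S_inf_cond w x t (sym x t) = w t (sym x t)).
  { intros t Ht. apply in_seq in Ht. unfold S_inf_cond. rewrite (Hnew t ltac:(lia)). cbn.
    split; [|reflexivity]. destruct (Hw t ltac:(lia)) as [Hp _].
    apply Hp; [apply (sym_lt K); auto; lia | apply Hnew; lia]. }
  destruct (ln_rprod (seq 0 (length x)) (fun t => S_inf_cond w x t (sym x t))) as [_ ->].
  { intros t Ht. apply (Hstep t Ht). }
  rewrite rsum_filter, <- rsum_opp. apply rsum_ext_in. intros t Ht.
  destruct (Hstep t Ht) as [Hp Heq]. rewrite Heq in Hp |- *.
  apply in_seq in Ht. rewrite (Hnew t ltac:(lia)). cbn.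
  unfold Rdiv. rewrite Rmult_1_l, ln_Rinv by exact Hp. ring.
Qed.

Lemma ML_term_eq K x : (1 <= length x)%nat ->
  ML_term K x = - INR (length x) * ln (INR (length x))
     + rsum (usedA K x) (fun j => INR (nocc x j) * ln (INR (nocc x j))).
Proof.
  intros Hn. unfold ML_term.
  assert (Hn0 : 0 < INR (length x)) by (apply lt_0_INR; lia).
  assert (Hj : forall j, In j (usedA K x) -> 0 < INR (nocc x j)).
  { intros j Hj. apply filter_In in Hj as [_ Hj]. apply Nat.ltb_lt in Hj. apply lt_0_INR, Hj. }
  destruct (ln_rprod (usedA K x) (fun j => INR (nocc x j) ^ nocc x j)) as [Hp Hl].
  { intros j Hjj. apply pow_lt, Hj, Hjj. }
  rewrite ln_mult, ln_Rinv, ln_pow, Hl by (try apply Rinv_0_lt_compat; try apply pow_lt; auto).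
  f_equal; [ring|]. apply rsum_ext_in. intros j Hjj. apply ln_pow, Hj, Hjj.
Qed.

Lemma symbol_stirling K x : Forall (fun a => (a < K)%nat) x ->
  rsum (usedA K x) (fun j => INR (nocc x j) * ln (INR (nocc x j)))
  - symbol_sum K (fun k => lnfact (k - 1)) x
  - rsum (usedA K x) (fun j => 1/2 * ln (INR (nocc x j)))
  <= INR (length x) - cS * INR (msize K x).
Proof.
  intros Hx. unfold msize, usedA.
  rewrite !rsum_filter, length_filter_rsum, (length_symbol_sum K x Hx). unfold symbol_sum.
  rewrite <- rsum_scal. unfold Rminus. rewrite <- !rsum_opp, <- !rsum_plus.
  apply rsum_le. intros j _.
  destruct (nocc x j) as [|k] eqn:Ek; cbn [Nat.ltb Nat.leb].
  - unfold lnfact. simpl. lra.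
  - generalize (stirling (S k) ltac:(lia)). lra.
Qed.

Lemma redundancy_le K x w beta :
  (1 <= length x)%nat -> Forall (fun a => (a < K)%nat) x -> valid_weights K x w -> 0 < beta ->
  redundancy K beta w x <=
    CL w x + rsum (usedA K x) (fun j => 1/2 * ln (INR (nocc x j)))
    - INR (length x) * ln (INR (length x)) + INR (length x) - cS * INR (msize K x)
    - INR (msize K x) * ln beta + trapezoid_bound (length x) beta.
Proof.
  intros Hn Hx Hw Hb. unfold redundancy.
  rewrite (ln_S_beta K x w beta Hx Hw Hb), (ML_term_eq K x Hn).
  generalize (symbol_stirling K x Hx) (sum_ln_shift_le (length x) beta Hb). lra.
Qed.

(* The numerical heart for beta = m / ln(n/m): writing L = ln(n/m), u = (n/m) L,
   the bound reduces to m (excess L + 1 - cS - 0.56) + (L - ln(1+u))/2 - 0.082 <= 0,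
   where excess L <= 0.4785 <= cS - 0.44 and 1 + u >= e^L. *)
Lemma real_case_gap (n m : R) : 1 <= m -> m < n ->
  let L := ln (n / m) in let b := m / L in
  - n * ln n + n - cS * m - m * ln b
  + ((n + b - 1/2) * ln (n + b) - n - (b - 1/2) * ln b)
  <= - (m - 1/2) * ln m - 1/2 * ln n + m * ln (ln (exp 1 * n / m)) + 56/100 * m + 82/1000.
Proof.
  intros Hm Hmn L b.
  assert (Hr1 : 1 < n / m) by (apply (Rmult_lt_reg_r m); [lra|]; field_simplify; lra).
  assert (HL : 0 < L) by (unfold L; rewrite <- ln_1; apply ln_increasing; lra).
  assert (Hr : exp L = n / m) by (apply exp_ln; lra).
  set (r := n / m) in *.
  assert (Hn : n = m * r) by (unfold r; field; lra).
  set (u := r * L).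
  assert (Hu : 0 < u) by (apply Rmult_lt_0_compat; lra).
  assert (E1 : ln n = ln m + L) by (rewrite Hn, ln_mult by lra; reflexivity).
  assert (E2 : ln b = ln m - ln L).
  { unfold b, Rdiv. rewrite ln_mult, ln_Rinv; try apply Rinv_0_lt_compat; lra. }
  assert (E3 : ln (n + b) = ln m + ln (1 + u) - ln L).
  { replace (n + b) with (m * ((1 + u) * / L)) by (unfold b, u; rewrite Hn; field; lra).
    rewrite !ln_mult, ln_Rinv; try apply Rinv_0_lt_compat; try apply Rmult_lt_0_compat;
      try apply Rinv_0_lt_compat; lra. }
  assert (E4 : ln (ln (exp 1 * n / m)) = ln (1 + L)).
  { replace (exp 1 * n / m) with (exp 1 * r) by (unfold r; field; lra).
    rewrite ln_mult, ln_exp by (try apply exp_pos; lra). reflexivity. }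
  rewrite E1, E2, E3, E4.
  assert (Hid : - (m * r) * (ln m + L) + m * r - cS * m - m * (ln m - ln L)
     + ((m * r + m / L - 1/2) * (ln m + ln (1 + u) - ln L) - m * r - (m / L - 1/2) * (ln m - ln L))
     - (- (m - 1/2) * ln m - 1/2 * (ln m + L) + m * ln (1 + L) + 56/100 * m + 82/1000)
     = m * ((u + 1) * ln (1 + u) / L + (1 - r) * ln L - u - 1 - ln (1 + L) + 1 - cS - 56/100)
       + (1/2 * (L - ln (1 + u)) - 82/1000)) by (unfold u; field; lra).
  assert (Hexc := excess_bound L HL). unfold excess in Hexc. rewrite Hr in Hexc. fold u in Hexc.
  assert (HcS : excess_bound_const + 44/100 <= cS)
    by (unfold excess_bound_const, cS; generalize ln2_hi; lra).
  assert (Hgrow : L <= ln (1 + u)).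
  { rewrite <- (ln_exp L). apply ln_le_mono; [apply exp_pos|].
    assert (Hneg := exp_ineq1_le (- L)).
    assert (Hinv : exp (- L) * exp L = 1) by (rewrite <- exp_plus, Rplus_opp_l; apply exp_0).
    rewrite Hr in *. unfold u. nra. }
  assert (Hm_coef : m * ((u + 1) * ln (1 + u) / L + (1 - r) * ln L - u - 1 - ln (1 + L)
                         + 1 - cS - 56/100) <= 0).
  { rewrite <- (Rmult_0_r m). apply Rmult_le_compat_l; [lra|].
    replace (u * 1) with u in Hexc by ring. lra. }
  rewrite Hn in *. unfold b. lra.
Qed.

Lemma redundancy_real_case K x w :
  (1 <= length x)%nat -> Forall (fun a => (a < K)%nat) x -> valid_weights K x w ->
  (msize K x < length x)%nat ->
  redundancy K (INR (msize K x) / ln (INR (length x) / INR (msize K x))) w x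
    <= theorem4_rhs K w x.
Proof.
  intros Hn Hx Hw Hlt.
  assert (Hm1 := msize_ge1 K x Hx Hn).
  assert (Hmn : INR (msize K x) < INR (length x)) by (apply lt_INR, Hlt).
  assert (HL : 0 < ln (INR (length x) / INR (msize K x))).
  { rewrite <- ln_1. apply ln_increasing; [lra|].
    apply (Rmult_lt_reg_r (INR (msize K x))); [lra|]. field_simplify; lra. }
  assert (Hb : 0 < INR (msize K x) / ln (INR (length x) / INR (msize K x)))
    by (apply Rdiv_lt_0_compat; lra).
  assert (Hgen := redundancy_le K x w _ Hn Hx Hw Hb).
  assert (Hgap := real_case_gap (INR (length x)) (INR (msize K x)) Hm1 Hmn).
  unfold trapezoid_bound in Hgen. unfold theorem4_rhs. cbv zeta in *. lra.
Qed.

Lemma redundancy_inf_case K x w :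
  (1 <= length x)%nat -> Forall (fun a => (a < K)%nat) x -> valid_weights K x w ->
  msize K x = length x -> redundancy_inf K w x <= theorem4_rhs K w x.
Proof.
  intros Hn Hx Hw Hm.
  assert (Hnew := all_steps_new K x Hx Hm).
  assert (Hold : symbol_sum K (fun k => lnfact (k - 1)) x = 0).
  { rewrite <- old_log_symbol_sum by exact Hx. unfold step_sum.
    rewrite <- (Rmult_0_r (INR (length (seq 0 (length x))))), <- rsum_const.
    apply rsum_ext_in. intros t Ht. apply in_seq in Ht. rewrite (Hnew t ltac:(lia)). reflexivity. }
  assert (Hst := symbol_stirling K x Hx). rewrite Hold, Hm in Hst.
  unfold redundancy_inf, theorem4_rhs. cbv zeta.
  rewrite (ln_S_inf K x w Hx Hw Hm), (ML_term_eq K x Hn), Hm.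
  assert (Hn0 : 0 < INR (length x)) by (apply lt_0_INR; lia).
  replace (exp 1 * INR (length x) / INR (length x)) with (exp 1) by (field; lra).
  rewrite ln_exp, ln_1.
  assert (HcS : 44/100 <= cS) by (unfold cS; generalize ln2_hi; lra).
  nra.
Qed.

Theorem theorem4 (K : nat) (x : list nat) (w : nat -> nat -> R)
  (Hn : (1 <= length x)%nat)
  (Hx : Forall (fun a => (a < K)%nat) x)
  (Hw : valid_weights K x w) :
  ((msize K x < length x)%nat ->
     redundancy K (INR (msize K x) / ln (INR (length x) / INR (msize K x))) w x
       <= theorem4_rhs K w x) /\
  (msize K x = length x ->
     redundancy_inf K w x <= theorem4_rhs K w x).
Proof.
  split.
  - apply redundancy_real_case; assumption.
  - apply redundancy_inf_case; assumption.
Qed.
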